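(* The polynomials in $S(\mathfrak h)^{W_I}$ separate the points $\widetilde\lambda$, $\lambda\in P_I^+$: for all $\lambda\neq\lambda'$ in $P_I^+$ there exists $q\in S(\mathfrak h)^{W_I}$ with $q(\widetilde\lambda)\neq q(\widetilde{\lambda'})$.
   Context: Let $\mathfrak a$ be a Euclidean space with inner product $(\cdot,\cdot)$, $\mathfrak h=\mathfrak a\otimes\mathbb C$, and $S(\mathfrak h)$ the symmetric algebra, viewed as polynomial functions on $\mathfrak h^*$. Let $R\subset\mathfrak a^*$ be a root system with Weyl group $W$ (acting on $\mathfrak h$ and $S(\mathfrak h)$), positive roots $R^+$, simple reflections $S$. Let $P$ be the weight lattice, $P^+$ the dominant weights and $P^-=-P^+$. Let $k=(k_\alpha)_{\alpha\in R}$ be a $W$-invariant multiplicity function with $k_\alpha\ge0$ and $\rho(k)=\frac12\sum_{\alpha\in R^+}k_\alpha\alpha$. For $\lambda\in P$ let $v(\lambda)$ be the minimal length element of $W$ with $v(\lambda)\lambda\in P^-$ and $\widetilde\lambda=\lambda-v(\lambda)^{-1}\rho(k)$. Let $I\subset S$, $W_I$ the parabolic subgroup generated by $I$, $R_I^+$ its positive roots and $P_I^+=\{\lambda\in P:(\lambda,\alpha)\ge0\ \forall\alpha\in R_I^+\}$. *)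

(* root systems in a^* = 'rV[R]_n (R real closed field),
   polynomials S(h) = {mpoly C[n]} (complex coefficients). *)
From HB Require Import structures.
From mathcomp Require Import all_boot all_order all_algebra.
From mathcomp Require Import complex mpoly.
Set Implicit Arguments. Unset Strict Implicit. Unset Printing Implicit Defensive.
Import Order.TTheory GRing.Theory Num.Theory.
Local Open Scope ring_scope.

Section RootSystems.
Variables (R : rcfType) (n : nat).
Local Notation V := 'rV[R]_n.
Local Notation C := (complex R).

Definition dotv (u v : V) : R := (u *m v^T) 0 0.

(* reflection s_a : x |-> x - 2(x,a)/(a,a) a, acting on row vectors x |-> x *m refl_mx a *)
Definition refl_mx (a : V) : 'M[R]_n := 1%:M - (2 / dotv a a) *: (a^T *m a).

Definition is_integer (x : R) : Prop := exists z : int, x = z%:~R.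

Definition coroot_pairing (b a : V) : R := 2 * dotv b a / dotv a a.

(* crystallographic (possibly non-reduced) root system, finite, spanning *)
Definition root_system (Rt : seq V) : Prop :=
  [/\ uniq Rt, 0 \notin Rt, <<Rt>>%VS = fullv,
      (forall a b, a \in Rt -> b \in Rt -> b *m refl_mx a \in Rt) &
      (forall a b, a \in Rt -> b \in Rt -> is_integer (coroot_pairing b a))].

Definition regular (Rt : seq V) (z : V) : Prop := forall a, a \in Rt -> dotv a z != 0.

Definition pos_roots (Rt : seq V) (z : V) : seq V := [seq a <- Rt | 0 < dotv a z].

Definition simple_rootb (Rt : seq V) (z : V) (a : V) : bool :=
  (a \in pos_roots Rt z) &&
  ~~ has (fun b => has (fun c => a == b + c) (pos_roots Rt z)) (pos_roots Rt z).

(* the element s_{a1} o ... o s_{ak} of W for the word [:: a1; ...; ak] *)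
Definition word_mx (ws : seq V) : 'M[R]_n := foldr (fun a M => M *m refl_mx a) 1%:M ws.

Definition in_W (Rt : seq V) (w : 'M[R]_n) : Prop :=
  exists ws, (forall a, a \in ws -> a \in Rt) /\ w = word_mx ws.

Definition multiplicity (Rt : seq V) (k : V -> R) : Prop :=
  forall w a, in_W Rt w -> a \in Rt -> k (a *m w) = k a.

Definition weight (Rt : seq V) (lam : V) : Prop :=
  forall a, a \in Rt -> is_integer (coroot_pairing lam a).

Definition dom_weight (Rt : seq V) (z : V) (lam : V) : Prop :=
  weight Rt lam /\ forall a, a \in pos_roots Rt z -> 0 <= dotv lam a.

Definition antidom_weight (Rt : seq V) (z : V) (lam : V) : Prop :=
  dom_weight Rt z (- lam).

Definition rho (Rt : seq V) (z : V) (k : V -> R) : V :=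
  2^-1 *: \sum_(a <- pos_roots Rt z) k a *: a.

(* w is the minimal length element v(lam) of W with w lam in P^-;
   length is measured by words in the simple reflections *)
Definition is_v (Rt : seq V) (z : V) (lam : V) (w : 'M[R]_n) : Prop :=
  exists ws, [/\ all (simple_rootb Rt z) ws, w = word_mx ws,
    antidom_weight Rt z (lam *m w) &
    forall ws', all (simple_rootb Rt z) ws' ->
      antidom_weight Rt z (lam *m word_mx ws') -> (size ws <= size ws')%N].

Definition is_tilde (Rt : seq V) (z : V) (k : V -> R) (lam mu : V) : Prop :=
  exists w, is_v Rt z lam w /\ mu = lam - rho Rt z k *m invmx w.

Definition in_WI (I : seq V) (w : 'M[R]_n) : Prop :=
  exists ws, all (mem I) ws /\ w = word_mx ws.

Definition dom_weight_I (Rt : seq V) (z : V) (I : seq V) (lam : V) : Prop :=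
  weight Rt lam /\
  forall a, a \in pos_roots Rt z -> a \in <<I>>%VS -> 0 <= dotv lam a.

Definition toC (x : V) : 'rV[C]_n := map_mx (real_complex R) x.
Definition toC_mx (w : 'M[R]_n) : 'M[C]_n := map_mx (real_complex R) w.

Definition peval (q : {mpoly C[n]}) (x : 'rV[C]_n) : C := meval (fun i => x 0 i) q.

(* q in S(h)^{W_I}: (w.q)(x) = q(w^{-1} x) equals q(x) for all w in W_I, x in h^* *)
Definition WI_invariant (I : seq V) (q : {mpoly C[n]}) : Prop :=
  forall w, in_WI I w -> forall x : 'rV[C]_n,
    peval q (x *m invmx (toC_mx w)) = peval q x.

End RootSystems.

(* The W_I-orbit S of λ~ is finite, so q(x) = Π_{s ∈ S} Σ_i (x_i - s_i)^2 is a
   W_I-invariant polynomial vanishing at λ~ and at no real point outside S.  It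
   remains to see that λ'~ is not in W_I λ~.  Let y = v(λ)λ and y' = v(λ')λ', both
   antidominant.  If u λ~ = λ'~ with u in W, then g = v(λ') u v(λ)^-1 maps
   ρ(k) - y to ρ(k) - y', and both are dominant because k >= 0 makes ρ(k)
   dominant.  An element of W carrying a dominant vector to a dominant one is a
   product of simple reflections fixing that vector, so g fixes ρ(k) - y and
   also y, which is orthogonal to the same simple roots.  Hence y = y' and
   u λ = λ'.  For u in W_I the same fact inside W_I, applied to the I-dominant
   λ and u λ = λ', gives λ = λ'. *)

From HB Require Import structures.
From mathcomp Require Import all_boot all_order all_algebra.
From mathcomp Require Import complex mpoly.
From mathcomp.algebra_tactics Require Import ring lra.
From mathcomp Require Import zify.
From Stdlib Require Import Classical.
Set Implicit Arguments. Unset Strict Implicit. Unset Printing Implicit Defensive.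
Import Order.TTheory GRing.Theory Num.Theory.
Local Open Scope ring_scope.

(** * The inner product and reflections *)

Section InnerProduct.
Variables (R : rcfType) (n : nat).
Local Notation V := 'rV[R]_n.

Lemma dotvE (u v : V) : dotv u v = \sum_j u 0 j * v 0 j.
Proof. by rewrite /dotv mxE; apply: eq_bigr => j _; rewrite mxE. Qed.

Lemma dotvC (u v : V) : dotv u v = dotv v u.
Proof. by rewrite !dotvE; apply: eq_bigr => j _; rewrite mulrC. Qed.

Lemma dotvDl (u v w : V) : dotv (u + v) w = dotv u w + dotv v w.
Proof. by rewrite /dotv mulmxDl mxE. Qed.

Lemma dotvZl c (u w : V) : dotv (c *: u) w = c * dotv u w.
Proof. by rewrite /dotv -scalemxAl mxE. Qed.

Lemma dotvNl (u w : V) : dotv (- u) w = - dotv u w.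
Proof. by rewrite /dotv mulNmx mxE. Qed.

Lemma dotvBl (u v w : V) : dotv (u - v) w = dotv u w - dotv v w.
Proof. by rewrite dotvDl dotvNl. Qed.

Lemma dotvZr c (u w : V) : dotv w (c *: u) = c * dotv w u.
Proof. by rewrite !(dotvC w) dotvZl. Qed.

Lemma dotvBr (u v w : V) : dotv w (u - v) = dotv w u - dotv w v.
Proof. by rewrite !(dotvC w) dotvBl. Qed.

Lemma dotv0r (w : V) : dotv w 0 = 0.
Proof. by rewrite /dotv trmx0 mulmx0 mxE. Qed.

Lemma dotv_suml (I : Type) (s : seq I) (P : pred I) (F : I -> V) w :
  dotv (\sum_(i <- s | P i) F i) w = \sum_(i <- s | P i) dotv (F i) w.
Proof. by rewrite /dotv mulmx_suml summxE. Qed.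

Lemma dotv_sumr (I : Type) (s : seq I) (P : pred I) (F : I -> V) w :
  dotv w (\sum_(i <- s | P i) F i) = \sum_(i <- s | P i) dotv w (F i).
Proof. by rewrite dotvC dotv_suml; apply: eq_bigr => i _; rewrite dotvC. Qed.

Lemma dotv_ge0 (u : V) : 0 <= dotv u u.
Proof. by rewrite dotvE sumr_ge0 // => j _; rewrite -expr2 sqr_ge0. Qed.

Lemma dotv_eq0 (u : V) : (dotv u u == 0) = (u == 0).
Proof.
apply/idP/eqP => [|->]; last by rewrite dotv0r.
rewrite dotvE psumr_eq0 => [/allP u0|j _]; last by rewrite -expr2 sqr_ge0.
apply/rowP => j; rewrite mxE.
by apply/eqP; rewrite -sqrf_eq0 expr2; apply: u0; rewrite mem_index_enum.
Qed.

Lemma dotv_gt0 (u : V) : u != 0 -> 0 < dotv u u.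
Proof. by move=> u0; rewrite lt_def dotv_eq0 u0 dotv_ge0. Qed.

Lemma dotv_mulmx (u v : V) (M : 'M[R]_n) : dotv (u *m M) v = dotv u (v *m M^T).
Proof. by rewrite /dotv trmx_mul trmxK mulmxA. Qed.

Lemma dotv_orthmx (W : 'M[R]_n) (u v : V) :
  W *m W^T = 1%:M -> dotv (u *m W) (v *m W) = dotv u v.
Proof. by move=> WWt; rewrite dotv_mulmx -mulmxA WWt mulmx1. Qed.

End InnerProduct.

Lemma invmx_orthmx (F : comUnitRingType) n (W : 'M[F]_n) :
  W *m W^T = 1%:M -> invmx W = W^T.
Proof.
move=> WWt; have [Wu _] := mulmx1_unit WWt.
by rewrite -[invmx W]mulmx1 -WWt mulmxA mulVmx // mul1mx.
Qed.

Section Reflections.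
Variables (R : rcfType) (n : nat).
Local Notation V := 'rV[R]_n.

Lemma row_mx_ext (A B : 'M[R]_n) : (forall x : V, x *m A = x *m B) -> A = B.
Proof. by move=> AB; apply/row_matrixP => i; rewrite !rowE AB. Qed.

Lemma refl_mxE (a x : V) : x *m refl_mx a = x - coroot_pairing x a *: a.
Proof.
rewrite /refl_mx mulmxBr mulmx1 -scalemxAr mulmxA [x *m a^T]mx11_scalar.
rewrite mul_scalar_mx scalerA /coroot_pairing /dotv; congr (_ - _ *: _); ring.
Qed.

Lemma trmx_refl (a : V) : (refl_mx a)^T = refl_mx a.
Proof. by rewrite /refl_mx linearB /= linearZ /= trmx1 trmx_mul trmxK. Qed.

Lemma dotv_refl (a x : V) : dotv (x *m refl_mx a) a = - dotv x a.
Proof.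
have [->|a0] := eqVneq a 0; first by rewrite !dotv0r oppr0.
rewrite refl_mxE dotvBl dotvZl /coroot_pairing mulfVK ?dotv_eq0 //; ring.
Qed.

Lemma refl_mx_fix (a x : V) : dotv x a = 0 -> x *m refl_mx a = x.
Proof. by move=> xa; rewrite refl_mxE /coroot_pairing xa mulr0 mul0r scale0r subr0. Qed.

Lemma refl_mxK (a : V) : a != 0 -> refl_mx a *m refl_mx a = 1%:M.
Proof.
move=> a0; apply: row_mx_ext => x; rewrite mulmx1 mulmxA (refl_mxE a (x *m _)).
by rewrite /coroot_pairing dotv_refl refl_mxE mulrN mulNr scaleNr opprK subrK.
Qed.

Lemma refl_mx_self (a : V) : a != 0 -> a *m refl_mx a = - a.
Proof.
move=> a0; rewrite refl_mxE /coroot_pairing mulfK ?dotv_eq0 //.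
by rewrite scaler_nat mulr2n opprD addrA subrr sub0r.
Qed.

Lemma refl_mxZ (a : V) c : c != 0 -> refl_mx (c *: a) = refl_mx a.
Proof.
move=> c0; apply: row_mx_ext => x; rewrite !refl_mxE /coroot_pairing.
have [->|a0] := eqVneq a 0; first by rewrite !scaler0.
rewrite !dotvZl !dotvZr scalerA; congr (_ - _ *: _).
by field; rewrite dotv_eq0 a0 c0.
Qed.

Lemma refl_mx_conj (W : 'M[R]_n) (b : V) :
  W *m W^T = 1%:M -> refl_mx b *m W = W *m refl_mx (b *m W).
Proof.
move=> WWt; apply: row_mx_ext => x.
by rewrite !mulmxA !refl_mxE /coroot_pairing !dotv_orthmx // mulmxBl scalemxAl.
Qed.

Lemma word_mx_cat (ws1 ws2 : seq V) :
  word_mx (ws1 ++ ws2) = word_mx ws2 *m word_mx ws1.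
Proof. by elim: ws1 => [|a ws1 IH] /=; rewrite ?mulmx1 // IH mulmxA. Qed.

Lemma word_mx_rcons (ws : seq V) b : word_mx (rcons ws b) = refl_mx b *m word_mx ws.
Proof. by rewrite -cats1 word_mx_cat /= mul1mx. Qed.

Lemma trmx_word_mx (ws : seq V) : (word_mx ws)^T = word_mx (rev ws).
Proof.
elim: ws => [|a ws IH] /=; first by rewrite trmx1.
by rewrite trmx_mul IH trmx_refl rev_cons word_mx_rcons.
Qed.

Lemma word_mx_orth (ws : seq V) : all (fun a => a != 0) ws ->
  word_mx ws *m (word_mx ws)^T = 1%:M.
Proof.
elim: ws => [|a ws IH] /=; first by rewrite trmx1 mulmx1.
case/andP=> a0 /IH WWt; rewrite trmx_mul trmx_refl mulmxA.
by rewrite -(mulmxA (word_mx ws)) refl_mxK // mulmx1.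
Qed.

End Reflections.

(** * Positive and simple roots *)

Lemma sub_count_lt (T : eqType) (p1 p2 : pred T) (s : seq T) x :
  subpred p1 p2 -> x \in s -> p2 x -> ~~ p1 x -> (count p1 s < count p2 s)%N.
Proof.
move=> p12; elim: s => [//|y s IH] /=; rewrite inE => /predU1P[<-|xs] p2x p1x.
  by rewrite p2x (negbTE p1x) add0n add1n ltnS sub_count.
by rewrite -addnS leq_add ?IH //; case: (p1 y) (p12 y) => // ->.
Qed.

Lemma perm_map_self (T : eqType) (f : T -> T) (s : seq T) :
  uniq s -> injective f -> {in s, forall x, f x \in s} -> perm_eq (map f s) s.
Proof.
move=> s_uniq f_inj fs; have fs_uniq : uniq (map f s) by rewrite map_inj_uniq.
apply: uniq_perm => //; apply: (uniq_min_size fs_uniq _ _).2; rewrite ?size_map //.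
by move=> _ /mapP[x xs ->]; apply: fs.
Qed.

Section RootSystem.
Variables (R : rcfType) (n : nat) (Rt : seq 'rV[R]_n) (z : 'rV[R]_n).
Hypothesis HR : root_system Rt.
Hypothesis Hz : regular Rt z.
Local Notation V := 'rV[R]_n.
Local Notation P := (pos_roots Rt z).
Local Notation simple := (simple_rootb Rt z).

Lemma root_neq0 a : a \in Rt -> a != 0.
Proof. by case: HR => _ Rt0 _ _ _ aR; apply: contraNneq Rt0 => <-. Qed.

Lemma root_refl a b : a \in Rt -> b \in Rt -> b *m refl_mx a \in Rt.
Proof. by case: HR => _ _ _ + _; apply. Qed.

Lemma root_opp a : a \in Rt -> - a \in Rt.
Proof. by move=> aR; rewrite -refl_mx_self ?root_neq0 ?root_refl. Qed.

Lemma word_root (ws : seq V) a : all (mem Rt) ws -> a \in Rt -> a *m word_mx ws \in Rt.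
Proof.
elim: ws a => [|b ws IH] a /=; first by rewrite mulmx1.
by case/andP=> bR wsR aR; rewrite mulmxA root_refl // IH.
Qed.

Lemma word_mx_orth_root (ws : seq V) : all (mem Rt) ws ->
  word_mx ws *m (word_mx ws)^T = 1%:M.
Proof. by move=> wsR; apply/word_mx_orth/(sub_all _ wsR) => a /root_neq0. Qed.

Lemma pos_rootP a : reflect (a \in Rt /\ 0 < dotv a z) (a \in P).
Proof. by rewrite mem_filter andbC; apply: andP. Qed.

Lemma root_pos_or_neg a : a \in Rt -> (0 < dotv a z) || (dotv a z < 0).
Proof. by move=> /Hz; rewrite neq_lt orbC. Qed.

Lemma simple_pos_root a : simple a -> a \in P.
Proof. by case/andP. Qed.

Lemma simple_root a : simple a -> a \in Rt.
Proof. by move/simple_pos_root/pos_rootP => []. Qed.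

Lemma simple_gt0 a : simple a -> 0 < dotv a z.
Proof. by move/simple_pos_root/pos_rootP => []. Qed.

Lemma simple_neq_add a b c : simple a -> b \in P -> c \in P -> a != b + c.
Proof. by case/andP=> _ /hasPn sa bP cP; apply: (hasPn (sa b bP)). Qed.

Lemma all_simple_root (ws : seq V) : all simple ws -> all (mem Rt) ws.
Proof. by move=> wss; apply: sub_all wss => a /simple_root. Qed.

Lemma pos_root_sum_simple b : b \in P ->
  exists2 ss : seq V, all simple ss & b = \sum_(g <- ss) g.
Proof.
have [N] := ubnP (count (fun c => dotv c z < dotv b z) P).
elim: N b => // N IH b /ltnSE HN bP.
have [sb|] := boolP (simple b); first by exists [:: b]; rewrite /= ?sb ?big_seq1.
rewrite /simple_rootb bP negbK => /hasP[c cP /hasP[d dP /eqP bcd]].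
have lower e f : e \in P -> f \in P -> b = e + f ->
    exists2 ss : seq V, all simple ss & e = \sum_(g <- ss) g.
  move=> eP /pos_rootP[_ fz] bef; apply: IH (eP); apply: leq_trans HN.
  have ltb : dotv e z < dotv b z by rewrite bef dotvDl ltrDl.
  apply: (sub_count_lt _ eP) => [y /= yz|//|]; last by rewrite ltxx.
  exact: lt_trans ltb.
have [sc sc_simple Ec] := lower c d cP dP bcd.
have [sd sd_simple Ed] := lower d c dP cP (etrans bcd (addrC c d)).
by exists (sc ++ sd); rewrite ?all_cat ?sc_simple // big_cat -Ec -Ed.
Qed.

Lemma simple_sub_notin a g : simple a -> simple g -> a != g -> g - a \notin Rt.
Proof.
move=> sa sg ag; apply/negP => gaR.
have [gap|gan] := orP (root_pos_or_neg gaR).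
  have /negP[] := simple_neq_add sg (simple_pos_root sa) (introT (pos_rootP _) (conj gaR gap)).
  by rewrite addrC subrK.
have agP : a - g \in P by apply/pos_rootP; rewrite -opprB root_opp // dotvNl oppr_gt0.
by have /negP[] := simple_neq_add sa (simple_pos_root sg) agP; rewrite addrC subrK.
Qed.

(* The pairings of [g] with [a] and of [a] with [g] are positive integers; a
   pairing 1 would make [g - a] a root, and pairings >= 2 force [|g - a|^2 <= 0]. *)
Lemma simple_dotv_le0 a g : simple a -> simple g -> a != g -> dotv g a <= 0.
Proof.
move=> sa sg ag; rewrite leNgt; apply/negP => ga_gt0.
have le_dotv b c : simple b -> simple c -> b != c -> 0 < dotv c b -> dotv b b <= dotv c b.
  move=> sb sc bc cb_gt0; have bb_gt0 := dotv_gt0 (root_neq0 (simple_root sb)).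
  case: HR => _ _ _ _ /(_ _ _ (simple_root sb) (simple_root sc))[m Em].
  have m_gt0 : (0 < m)%R by rewrite -(ltr0z R) -Em /coroot_pairing divr_gt0 ?mulr_gt0.
  have [m1|m_ne1] := eqVneq m 1.
    have := root_refl (simple_root sb) (simple_root sc).
    by rewrite refl_mxE Em m1 scale1r (negbTE (simple_sub_notin sb sc bc)).
  have : (2 : R) <= m%:~R by rewrite -[2 : R]/((2:int)%:~R) ler_int; lia.
  by rewrite -Em /coroot_pairing ler_pdivlMr //; lra.
have h1 := le_dotv a g sa sg ag ga_gt0.
have h2 : dotv g g <= dotv a g.
  by apply: le_dotv; rewrite // 1?eq_sym // dotvC.
have ga0 : g - a != 0 by rewrite subr_eq0 eq_sym.
have := dotv_gt0 ga0; rewrite !dotvBl !dotvBr (dotvC a g) in h2 *; lra.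
Qed.

Lemma sum_simple_collinear (ss : seq V) a c : simple a -> all simple ss ->
  \sum_(g <- ss) g = c *: a -> all (pred1 a) ss.
Proof.
move=> sa ss_simple Ess; apply: contraT => /allPn[g gss /= ga].
set u := \sum_(h <- ss | h != a) h.
have Eu : u = (c - (count (pred1 a) ss)%:R) *: a.
  rewrite scalerBl -Ess (bigID (pred1 a)) /= (eq_bigr (fun=> a)) => [|h /eqP //].
  by rewrite big_const_seq iter_addr_0 scaler_nat addrAC subrr add0r.
have h_z h : h \in ss -> 0 < dotv h z by move=> /(allP ss_simple)/simple_gt0.
have u_z : 0 < dotv u z.
  rewrite dotv_suml big_seq_cond lt_def psumr_neq0 => [|h /andP[/h_z/ltW //]].
  rewrite sumr_ge0 ?andbT => [|h /andP[/h_z/ltW //]].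
  by apply/hasP; exists g; rewrite ?gss ?ga ?h_z.
have u_a : dotv u a <= 0.
  rewrite dotv_suml big_seq_cond sumr_le0 // => h /andP[hss ha].
  by rewrite simple_dotv_le0 // ?(allP ss_simple) // eq_sym.
have a_z := simple_gt0 sa; have a_a := dotv_gt0 (root_neq0 (simple_root sa)).
rewrite Eu dotvZl pmulr_lgt0 // in u_z.
by rewrite Eu dotvZl pmulr_lle0 // leNgt u_z in u_a.
Qed.

Lemma pos_root_refl_neg a b : simple a -> b \in P -> dotv (b *m refl_mx a) z < 0 ->
  exists2 c, 0 < c & b = c *: a.
Proof.
move=> sa bP bsa_lt0; have /pos_rootP[bR _] := bP.
have [ss ss_simple Eb] := pos_root_sum_simple bP.
have [ss' ss'_simple Eb'] : exists2 ss' : seq V, all simple ss' &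
    - (b *m refl_mx a) = \sum_(g <- ss') g.
  apply: pos_root_sum_simple; apply/pos_rootP.
  split; last by rewrite dotvNl oppr_gt0.
  by apply/root_opp/root_refl; first exact: simple_root.
have /allP ss_a : all (pred1 a) (ss ++ ss').
  apply: (@sum_simple_collinear _ _ (coroot_pairing b a)); rewrite ?all_cat ?ss_simple //.
  by rewrite big_cat /= -Eb -Eb' refl_mxE opprB addrC subrK.
exists (size ss)%:R.
  rewrite ltr0n lt0n size_eq0; apply: contraNneq (root_neq0 bR) => ss0.
  by rewrite Eb ss0 big_nil.
rewrite Eb (eq_big_seq (fun=> a)) => [|g gss]; last by apply/eqP/ss_a; rewrite mem_cat gss.
by rewrite big_const_seq iter_addr_0 scaler_nat count_predT.
Qed.

Lemma word_deletion (ws : seq V) b : all simple ws -> b \in P ->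
  dotv (b *m word_mx ws) z < 0 ->
  exists2 i, (i < size ws)%N & refl_mx b *m word_mx ws = word_mx (take i ws ++ drop i.+1 ws).
Proof.
elim: ws => [|a ws IH] /=; first by rewrite mulmx1 => _ /pos_rootP[_ /lt_trans h] /h; rewrite ltxx.
case/andP=> sa ws_simple bP; have /pos_rootP[bR _] := bP.
have gR : b *m word_mx ws \in Rt by rewrite word_root ?all_simple_root.
rewrite mulmxA; have /orP[g_gt0 g_sa_lt0|g_lt0 _] := root_pos_or_neg gR.
  have [c c_gt0 Ec] := pos_root_refl_neg sa (introT (pos_rootP _) (conj gR g_gt0)) g_sa_lt0.
  exists 0%N => //=; rewrite drop0 mulmxA refl_mx_conj ?word_mx_orth_root ?all_simple_root //.
  by rewrite Ec refl_mxZ ?gt_eqF // -mulmxA refl_mxK ?mulmx1 ?root_neq0 ?simple_root.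
by have [i ilt E] := IH ws_simple bP g_lt0; exists i.+1; rewrite // mulmxA E.
Qed.

(** * Dominance and the element ρ(k) *)

Definition dom_on (J : seq V) (p : V) : Prop :=
  forall a, a \in P -> a \in <<J>>%VS -> 0 <= dotv p a.

Lemma word_span (J ws : seq V) x : all (mem J) ws -> x \in <<J>>%VS ->
  x *m word_mx ws \in <<J>>%VS.
Proof.
elim: ws x => [|a ws IH] x /=; first by rewrite mulmx1.
case/andP=> aJ wsJ xJ; rewrite mulmxA refl_mxE.
by rewrite memvB ?memvZ ?IH // memv_span.
Qed.

(* Induct on the length of [ws]: either its last reflection [s_b] already fixes
   [p], so [(p, b) = 0], or the word is not reduced and the deletion condition
   shortens it. *)
Lemma dom_word_fixed (J ws : seq V) p q : all simple J -> all (mem J) ws ->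
  dom_on J p -> dom_on J (p *m word_mx ws) ->
  {in J, forall a, dotv p a = 0 -> dotv q a = 0} -> q *m word_mx ws = q.
Proof.
move=> J_simple + p_dom; have [N] := ubnP (size ws); elim: N ws => // N IH.
case/lastP => [|ws b]; rewrite ?mulmx1 // size_rcons ltnS all_rcons word_mx_rcons.
move=> ws_lt /andP[bJ wsJ] pw_dom pq.
have sb : simple b := allP J_simple b bJ.
have ws_simple : all simple ws := sub_all (allP J_simple) wsJ.
have gR : b *m word_mx ws \in Rt by rewrite word_root ?all_simple_root ?simple_root.
have /orP[g_gt0|g_lt0] := root_pos_or_neg gR.
  have pb0 : dotv p b = 0.
    apply/eqP; rewrite eq_le p_dom ?simple_pos_root ?memv_span // andbT -oppr_ge0.
    rewrite -(dotv_refl b) -(dotv_orthmx _ _ (word_mx_orth_root (all_simple_root ws_simple))).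
    by rewrite -mulmxA pw_dom ?word_span ?memv_span //; apply/pos_rootP.
  rewrite mulmxA refl_mx_fix ?pq //; apply: IH pq => //.
  by rewrite mulmxA refl_mx_fix in pw_dom.
have [i ilt E] := word_deletion ws_simple (simple_pos_root sb) g_lt0.
rewrite E in pw_dom *; apply: IH pw_dom pq.
  by rewrite size_cat size_take size_drop ilt; lia.
by apply/allP => x; rewrite mem_cat => /orP[/mem_take|/mem_drop]; apply/allP.
Qed.

Lemma dom_word_fixed_simple ws p q : all simple ws ->
  (forall a, a \in P -> 0 <= dotv p a) ->
  (forall a, a \in P -> 0 <= dotv (p *m word_mx ws) a) ->
  (forall a, simple a -> dotv p a = 0 -> dotv q a = 0) -> q *m word_mx ws = q.
Proof.
move=> ws_simple p_dom pw_dom pq; set J := [seq a <- Rt | simple a].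
have J_simple : all simple J by apply/allP => a; rewrite mem_filter => /andP[].
apply: (dom_word_fixed (p := p) J_simple) => [|a aP _|a aP _|a]; rewrite ?p_dom ?pw_dom //.
  by apply: sub_all ws_simple => a sa; rewrite /= mem_filter sa simple_root.
by rewrite mem_filter => /andP[/pq].
Qed.

Variable k : V -> R.
Hypothesis Hk : multiplicity Rt k.
Hypothesis Hk0 : forall a, a \in Rt -> 0 <= k a.

Lemma sum_pos_refl_pos_eq0 a : a \in Rt ->
  \sum_(b <- P | 0 < dotv (b *m refl_mx a) z) k b * dotv b a = 0.
Proof.
move=> aR; rewrite -big_filter; set P1 := filter _ _.
have P1P b : (b \in P1) = [&& 0 < dotv (b *m refl_mx a) z, 0 < dotv b z & b \in Rt].
  by rewrite !mem_filter.
have sK b : b *m refl_mx a *m refl_mx a = b by rewrite -mulmxA refl_mxK ?mulmx1 ?root_neq0.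
have P1_perm : perm_eq (map (mulmx^~ (refl_mx a)) P1) P1.
  apply: perm_map_self => [|x y /(congr1 (mulmx^~ (refl_mx a)))|b]; rewrite ?sK //.
    by rewrite !filter_uniq //; case: HR.
  by rewrite !P1P sK => /and3P[-> -> bR]; rewrite root_refl.
set S := \sum_(b <- P1) _; suff : S = - S.
  by move/eqP; rewrite -addr_eq0 -mulr2n mulrn_eq0 => /eqP.
rewrite {1}/S -(perm_big _ P1_perm) big_map -sumrN; apply: eq_big_seq => b.
rewrite P1P => /and3P[_ _ bR].
have sa_W : in_W Rt (refl_mx a).
  by exists [:: a]; split=> [c|]; rewrite ?inE /= ?mul1mx // => /eqP->.
by rewrite (Hk sa_W bR) dotv_refl mulrN.
Qed.

(* [s_a] permutes the positive roots it keeps positive, so they contribute 0;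
   the positive roots it makes negative are positive multiples of [a]. *)
Lemma dotv_rho_simple_ge0 a : simple a -> 0 <= dotv (rho Rt z k) a.
Proof.
move=> sa; have aR := simple_root sa.
rewrite /rho dotvZl dotv_suml mulr_ge0 ?invr_ge0 ?ler0n //.
under eq_bigr do rewrite dotvZl.
rewrite (bigID (fun b => 0 < dotv (b *m refl_mx a) z)) /= sum_pos_refl_pos_eq0 // add0r.
rewrite big_seq_cond sumr_ge0 // => b /andP[bP bsa]; have /pos_rootP[bR _] := bP.
have bsa_lt0 : dotv (b *m refl_mx a) z < 0.
  by have := root_pos_or_neg (root_refl aR bR); rewrite (negbTE bsa).
have [c c_gt0 Eb] := pos_root_refl_neg sa bP bsa_lt0.
by rewrite mulr_ge0 ?Hk0 // Eb dotvZl mulr_ge0 ?dotv_ge0 ?ltW.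
Qed.

Lemma dotv_rho_pos_ge0 b : b \in P -> 0 <= dotv (rho Rt z k) b.
Proof.
move=> /pos_root_sum_simple[ss ss_simple ->].
by rewrite dotv_sumr big_seq sumr_ge0 // => g /(allP ss_simple)/dotv_rho_simple_ge0.
Qed.

Lemma antidom_pos_le0 y a : antidom_weight Rt z y -> a \in P -> dotv y a <= 0.
Proof. by move=> [_ y_anti] /y_anti; rewrite dotvNl oppr_ge0. Qed.

Lemma tilde_word_eq lam lam' mu mu' ws :
  is_tilde Rt z k lam mu -> is_tilde Rt z k lam' mu' -> all simple ws ->
  mu *m word_mx ws = mu' -> lam *m word_mx ws = lam'.
Proof.
move=> [_ [[vs [vs_simple -> y_anti _]] ->]] [_ [[vs' [vs'_simple -> y'_anti _]] ->]].
move=> ws_simple E.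
have [v_orth v'_orth] := (word_mx_orth_root (all_simple_root vs_simple),
  word_mx_orth_root (all_simple_root vs'_simple)).
rewrite !invmx_orthmx // in E.
set v := word_mx vs in v_orth y_anti E; set v' := word_mx vs' in v'_orth y'_anti E.
set u := word_mx ws in E *; set r := rho Rt z k in E.
set y := lam *m v in y_anti; set y' := lam' *m v' in y'_anti.
set g := word_mx (vs' ++ ws ++ rev vs).
have g_simple : all simple (vs' ++ ws ++ rev vs).
  by rewrite !all_cat all_rev vs_simple ws_simple vs'_simple.
have Eg : g = v^T *m u *m v' by rewrite /g !word_mx_cat trmx_word_mx.
set p := r - y.
have Epg : p *m g = r - y'.
  rewrite Eg /p !mulmxA mulmxBl -(mulmxA lam) v_orth mulmx1 -opprB mulNmx E.
  by rewrite mulNmx mulmxBl -mulmxA (mulmx1C v'_orth) mulmx1 opprB.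
have dom_r_sub x : antidom_weight Rt z x -> forall a, a \in P -> 0 <= dotv (r - x) a.
  move=> x_anti a aP; rewrite dotvBl subr_ge0.
  exact: le_trans (antidom_pos_le0 x_anti aP) (dotv_rho_pos_ge0 aP).
have y_perp a : simple a -> dotv p a = 0 -> dotv y a = 0.
  move=> sa /eqP; rewrite dotvBl subr_eq0 => /eqP ry.
  apply/eqP; rewrite eq_le antidom_pos_le0 ?simple_pos_root // -ry.
  exact: dotv_rho_simple_ge0.
have dom_pg : forall a, a \in P -> 0 <= dotv (p *m g) a by rewrite Epg; apply: dom_r_sub.
have yg : y *m g = y := dom_word_fixed_simple g_simple (dom_r_sub _ y_anti) dom_pg y_perp.
have pg : p *m g = p := dom_word_fixed_simple g_simple (dom_r_sub _ y_anti) dom_pg (fun _ _ => id).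
have y'y : y' = y by apply: oppr_inj; apply: (addrI r); rewrite -Epg pg.
have luv' : lam *m u *m v' = y *m g.
  by rewrite Eg /y !mulmxA -(mulmxA lam v) v_orth mulmx1.
by rewrite -[LHS]mulmx1 -v'_orth mulmxA luv' yg -y'y -mulmxA v'_orth mulmx1.
Qed.

Lemma tilde_orbit_neq I lam lam' mu mu' ws : all simple I ->
  dom_weight_I Rt z I lam -> dom_weight_I Rt z I lam' -> lam != lam' ->
  is_tilde Rt z k lam mu -> is_tilde Rt z k lam' mu' ->
  all (mem I) ws -> mu *m word_mx ws != mu'.
Proof.
move=> I_simple [_ lam_dom] [_ lam'_dom] + tl tl' wsI; apply: contra_neq => E.
have lam_u := tilde_word_eq tl tl' (sub_all (allP I_simple) wsI) E.
rewrite -lam_u; apply/esym/(dom_word_fixed I_simple wsI lam_dom) => //.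
by rewrite lam_u.
Qed.

End RootSystem.

(** * Finite orbits and invariant polynomials *)

Lemma enum_of_injective (T U : eqType) (A : T -> Prop) (f : T -> U) (F : seq U) :
  (forall x y, A x -> A y -> f x = f y -> x = y) -> (forall x, A x -> f x \in F) ->
  exists2 S : seq T, uniq S & forall x, x \in S <-> A x.
Proof.
elim: F A => [|u F IH] A f_inj fA; first by exists [::] => // x; split => // /fA.
have [S S_uniq SA] : exists2 S : seq T, uniq S & forall x, x \in S <-> A x /\ f x != u.
  apply: IH => [x y [Ax _] [Ay _]|x [/fA]]; first exact: f_inj.
  by rewrite inE => /predU1P[->|]; rewrite ?eqxx.
have [[x [Ax fxu]]|no_u] := classic (exists x, A x /\ f x = u); last first.
  exists S => // y; split=> [/SA[]//|Ay]; apply/SA; split=> //.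
  by apply/eqP => fyu; apply: no_u; exists y.
exists (x :: S) => [|y]; first by rewrite /= S_uniq andbT; apply/negP => /SA[_]; rewrite fxu eqxx.
rewrite inE; split=> [/predU1P[->|/SA[]]//|Ay]; apply/predU1P.
have [fyu|fyu] := eqVneq (f y) u; last by right; apply/SA.
by left; apply: f_inj; rewrite ?fyu.
Qed.

Fixpoint seqs_over (T : Type) (F : seq T) (m : nat) : seq (seq T) :=
  if m is m'.+1 then [seq c :: t | c <- F, t <- seqs_over F m'] else [:: [::]].

Lemma mem_seqs_over (T : eqType) (F t : seq T) :
  all (mem F) t -> t \in seqs_over F (size t).
Proof.
elim: t => [|c t IH] /=; first by rewrite inE.
by case/andP=> cF tF; apply: allpairs_f => //; apply: IH.
Qed.

Section Orbit.
Variables (R : rcfType) (n : nat) (Rt : seq 'rV[R]_n).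
Hypothesis HR : root_system Rt.
Local Notation V := 'rV[R]_n.

Definition orbit_WI (I : seq V) (mu x : V) : Prop :=
  exists2 ws, all (mem I) ws & x = mu *m word_mx ws.

Lemma dotv_roots_inj (x y : V) :
  [seq dotv x a | a <- Rt] = [seq dotv y a | a <- Rt] -> x = y.
Proof.
move/eq_in_map => xy; apply/eqP; rewrite -subr_eq0 -dotv_eq0.
have: x - y \in <<Rt>>%VS by case: HR => _ _ -> _ _; apply: memvf.
move/(@coord_span _ _ _ (in_tuple Rt)) => {2}->.
rewrite dotv_sumr big1 // => i _; rewrite dotvZr dotvBl xy ?subrr ?mulr0 //.
by rewrite mem_nth.
Qed.

(* A point is determined by its pairings with the roots, and along the orbit
   these pairings stay in the finite set of pairings of [mu] with roots. *)
Lemma orbit_enum (I : seq V) (mu : V) : all (mem Rt) I ->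
  exists2 S : seq V, uniq S & forall x, x \in S <-> orbit_WI I mu x.
Proof.
move=> IR; apply: (@enum_of_injective _ _ _ (fun x => [seq dotv x a | a <- Rt])
  (seqs_over [seq dotv mu b | b <- Rt] (size Rt))) => [x y _ _|x [ws wsI ->]].
  exact: dotv_roots_inj.
rewrite -(size_map (dotv (mu *m word_mx ws))) mem_seqs_over //.
apply/allP => _ /mapP[a aR ->]; rewrite dotv_mulmx trmx_word_mx; apply: map_f.
by rewrite word_root // all_rev (sub_all (allP IR) wsI).
Qed.

Lemma orbit_perm (I : seq V) (mu : V) (S : seq V) ws :
  all (mem Rt) I -> uniq S -> (forall x, x \in S <-> orbit_WI I mu x) ->
  all (mem I) ws -> perm_eq (map (mulmx^~ (word_mx ws)) S) S.
Proof.
move=> IR S_uniq SO wsI; have wsR := sub_all (allP IR) wsI.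
apply: perm_map_self => // [x y|x /SO[ws' ws'I ->]].
  move/(congr1 (mulmx^~ (word_mx ws)^T)).
  by rewrite -!mulmxA (word_mx_orth_root HR wsR) !mulmx1.
by apply/SO; exists (ws ++ ws'); rewrite ?all_cat ?ws'I ?wsI // word_mx_cat mulmxA.
Qed.

End Orbit.

Section OrbitPolynomial.
Variables (R : rcfType) (n : nat).
Local Notation C := (complex R).

(* The bilinear (not Hermitian) extension of the inner product, which is
   polynomial. *)
Definition qformC (y : 'rV[C]_n) : C := \sum_i y 0 i ^+ 2.

Lemma qformC_orth (U : 'M[C]_n) y : U *m U^T = 1%:M -> qformC (y *m U) = qformC y.
Proof.
have qE (x : 'rV[C]_n) : qformC x = (x *m x^T) 0 0.
  by rewrite mxE; apply: eq_bigr => i _; rewrite mxE expr2.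
by move=> UUt; rewrite !qE trmx_mul mulmxA -(mulmxA y) UUt mulmx1.
Qed.

Lemma qformC_toC (d : 'rV[R]_n) : qformC (toC d) = real_complex R (dotv d d).
Proof.
rewrite /qformC dotvE (rmorph_sum (real_complex R)); apply: eq_bigr => i _.
by rewrite mxE expr2 rmorphM.
Qed.

Definition orbit_poly (S : seq 'rV[R]_n) : {mpoly C[n]} :=
  \prod_(s <- S) \sum_(i < n) ('X_i - (toC s 0 i)%:MP) ^+ 2.

Lemma peval_orbit_poly S x : peval (orbit_poly S) x = \prod_(s <- S) qformC (x - toC s).
Proof.
rewrite /peval /orbit_poly rmorph_prod; apply: eq_bigr => s _.
rewrite rmorph_sum; apply: eq_bigr => i _.
by rewrite rmorphXn rmorphB /= mevalXU mevalC !mxE.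
Qed.

Lemma orbit_poly_invariant S (W : 'M[R]_n) x : W *m W^T = 1%:M ->
  perm_eq (map (mulmx^~ W) S) S ->
  peval (orbit_poly S) (x *m invmx (toC_mx W)) = peval (orbit_poly S) x.
Proof.
move=> WWt SW; rewrite !peval_orbit_poly -[RHS](perm_big _ SW) big_map.
have UUt : toC_mx W *m (toC_mx W)^T = 1%:M by rewrite matrix.map_trmx -map_mxM WWt map_mx1.
rewrite invmx_orthmx //; apply: eq_bigr => s _.
rewrite -(qformC_orth _ UUt) mulmxBl -mulmxA (mulmx1C UUt) mulmx1.
by rewrite /toC map_mxM.
Qed.

Lemma peval_orbit_poly_eq0 S x : x \in S -> peval (orbit_poly S) (toC x) = 0.
Proof.
move=> xS; rewrite peval_orbit_poly (big_rem _ xS) /= subrr.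
by rewrite /qformC big1 ?mul0r // => i _; rewrite mxE expr0n.
Qed.

Lemma peval_orbit_poly_neq0 S x : x \notin S -> peval (orbit_poly S) (toC x) != 0.
Proof.
move=> xS; rewrite peval_orbit_poly prodf_seq_neq0; apply/allP => s sS /=.
rewrite -map_mxB qformC_toC fmorph_eq0 dotv_eq0 subr_eq0.
by apply: contraNneq xS => ->.
Qed.

End OrbitPolynomial.

Unset Implicit Arguments.

Theorem mainTheorem9 (R : rcfType) (n : nat) (Rt : seq 'rV[R]_n) (z : 'rV[R]_n)
  (k : 'rV[R]_n -> R) (I : seq 'rV[R]_n) :
  root_system Rt -> regular Rt z ->
  multiplicity Rt k -> (forall a, a \in Rt -> 0 <= k a) ->
  all (simple_rootb Rt z) I ->
  forall lam lam' mu mu' : 'rV[R]_n,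
    dom_weight_I Rt z I lam -> dom_weight_I Rt z I lam' -> lam != lam' ->
    is_tilde Rt z k lam mu -> is_tilde Rt z k lam' mu' ->
    exists q : {mpoly (complex R)[n]},
      WI_invariant I q /\ peval q (toC mu) != peval q (toC mu').
Proof.
move=> HR Hz Hk Hk0 I_simple lam lam' mu mu' Hl Hl' ll' Ht Ht'.
have IR : all (mem Rt) I := all_simple_root I_simple.
have [S S_uniq S_orbit] := orbit_enum HR mu IR.
exists (orbit_poly S); split.
  move=> _ [ws [wsI ->]] x; apply: orbit_poly_invariant.
    by apply/(word_mx_orth_root HR)/allP => a /(allP wsI)/(allP IR).
  by apply: (orbit_perm HR IR S_uniq S_orbit).
rewrite peval_orbit_poly_eq0; last by apply/S_orbit; exists [::]; rewrite ?mulmx1.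
rewrite eq_sym peval_orbit_poly_neq0 //; apply/negP => /S_orbit[ws wsI Emu'].
by have /negP[] := tilde_orbit_neq HR Hz Hk Hk0 I_simple Hl Hl' ll' Ht Ht' wsI; rewrite Emu'.
Qed.
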